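(* Let $V$ be an irreducible $\tau$-module with finite-dimensional weight spaces, and let $z_1,z_2$ be non-zero central operators on $V$ of the same degree $\underline m$. Then $z_1=cz_2$ for some constant $c\in\mathbb C$. In particular, in each degree the non-zero central operators span a space of dimension at most one.
   Context: Let $\mathring{\mathfrak g}$ be a finite-dimensional simple Lie algebra over $\mathbb C$ with Cartan subalgebra $\mathring{\mathfrak h}$ and a nondegenerate invariant symmetric bilinear form $(\cdot,\cdot)$. Fix $n\ge2$, $A=\mathbb C[t_1^{\pm1},\dots,t_n^{\pm1}]$, $t^{\underline m}=t_1^{m_1}\cdots t_n^{m_n}$. Let $\mathcal Z$ be spanned by symbols $t^{\underline m}K_i$ subject to $\sum_im_it^{\underline m}K_i=0$; $K_i=t^0K_i$; $d(t^{\underline r})t^{\underline s}=\sum_ir_it^{\underline r+\underline s}K_i$. The toroidal Lie algebra $\tau=\mathring{\mathfrak g}\otimes A\oplus\mathcal Z\oplus D$, $D=\mathrm{span}(d_1,\dots,d_n)$, has bracket $[X\otimes t^{\underline r},Y\otimes t^{\underline s}]=[X,Y]\otimes t^{\underline r+\underline s}+(X,Y)d(t^{\underline r})t^{\underline s}$, $\mathcal Z$ central in $\mathring{\mathfrak g}\otimes A\oplus\mathcal Z$, $[d_i,X\otimes t^{\underline r}]=r_iX\otimes t^{\underline r}$, $[d_i,t^{\underline m}K_j]=m_it^{\underline m}K_j$, $[d_i,d_j]=0$. Weight spaces are with respect to $\underline{\mathfrak h}=\mathring{\mathfrak h}\oplus\mathrm{span}(K_i)\oplus D$. A central operator of degree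 $\underline m$ on $V$ is a linear map $z:V\to V$ commuting with the action of $\mathring{\mathfrak g}\otimes A\oplus\mathcal Z$ and satisfying $d_iz-zd_i=m_iz$ for all $i$. *)

From mathcomp Require Import all_boot all_algebra.
From mathcomp Require Export complex reals.
Set Implicit Arguments. Unset Strict Implicit. Unset Printing Implicit Defensive.
Import GRing.Theory.
Local Open Scope ring_scope.

Section LieDefs.
Variable K : fieldType.

Variable g : vectType K.
Variable br : g -> g -> g.

Definition is_lie_bracket : Prop :=
  [/\ (forall (a : K) (x y z : g), br (a *: x + y) z = a *: br x z + br y z),
      (forall (a : K) (x y z : g), br z (a *: x + y) = a *: br z x + br z y),
      (forall x : g, br x x = 0) &
      (forall x y z : g, br x (br y z) + br y (br z x) + br z (br x y) = 0)].

Definition lie_ideal (I : {vspace g}) : Prop :=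
  forall x y : g, y \in I -> br x y \in I.

Definition simple_lie : Prop :=
  is_lie_bracket /\ (exists x y : g, br x y != 0) /\
  (forall I : {vspace g}, lie_ideal I -> I = 0%VS \/ I = fullv).

(* Cartan subalgebra: nilpotent self-normalizing subalgebra *)
Definition cartan_subalgebra (h : {vspace g}) : Prop :=
  [/\ (forall x y, x \in h -> y \in h -> br x y \in h),
      (exists N : nat, forall (hs : seq g) (x : g),
          size hs = N -> all (fun a => a \in h) hs -> x \in h ->
          foldr br x hs = 0) &
      (forall x : g, (forall y, y \in h -> br x y \in h) -> x \in h)].

Definition nondeg_invariant_form (form : g -> g -> K) : Prop :=
  [/\ (forall (a : K) (x y z : g), form (a *: x + y) z = a * form x z + form y z),
      (forall x y, form x y = form y x),
      (forall x y z, form (br x y) z = form x (br y z)) &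
      (forall x, (forall y, form x y = 0) -> x = 0)].

Variable n : nat.
Variable V : lmodType K.

Definition lin_op (f : V -> V) : Prop :=
  forall (a : K) (u v : V), f (a *: u + v) = a *: f u + f v.

(* rho X r   = action of X (x) t^r,
   kk m i    = action of t^m K_i,
   dd i      = action of d_i.
   Elements r of Z^n are row vectors 'rV[int]_n, with r_i = r ord0 i. *)
Definition is_tau_module
    (rho : g -> 'rV[int]_n -> V -> V) (kk : 'rV[int]_n -> 'I_n -> V -> V)
    (dd : 'I_n -> V -> V) (form : g -> g -> K) : Prop :=
  [/\
      (forall x r, lin_op (rho x r)) /\ (forall m i, lin_op (kk m i)) /\
      (forall i, lin_op (dd i)),
      (forall (a : K) (x y : g) (r : 'rV[int]_n) v, rho (a *: x + y) r v = a *: rho x r v + rho y r v),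
      (* defining relations of Z : sum_i m_i t^m K_i = 0 *)
      (forall (m : 'rV[int]_n) v, \sum_(i < n) ((m ord0 i)%:~R : K) *: kk m i v = 0),
      (forall x y (r s : 'rV[int]_n) v,
          rho x r (rho y s v) - rho y s (rho x r v) =
          rho (br x y) (r + s) v
          + form x y *: \sum_(i < n) ((r ord0 i)%:~R : K) *: kk (r + s) i v) &
      [/\
          (forall m i x r v, kk m i (rho x r v) = rho x r (kk m i v)),
          (forall m i m' j v, kk m i (kk m' j v) = kk m' j (kk m i v)),
          (forall i x (r : 'rV[int]_n) v, dd i (rho x r v) - rho x r (dd i v)
                            = ((r ord0 i)%:~R : K) *: rho x r v),
          (forall i (m : 'rV[int]_n) j v, dd i (kk m j v) - kk m j (dd i v)
                            = ((m ord0 i)%:~R : K) *: kk m j v) &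
          (forall i j v, dd i (dd j v) = dd j (dd i v))]].

Definition subspace (S : V -> Prop) : Prop :=
  S 0 /\ (forall (a : K) u v, S u -> S v -> S (a *: u + v)).

Definition tau_irreducible
    (rho : g -> 'rV[int]_n -> V -> V) (kk : 'rV[int]_n -> 'I_n -> V -> V)
    (dd : 'I_n -> V -> V) : Prop :=
  (exists v : V, v != 0) /\
  (forall S : V -> Prop, subspace S ->
     (forall x r v, S v -> S (rho x r v)) ->
     (forall m i v, S v -> S (kk m i v)) ->
     (forall i v, S v -> S (dd i v)) ->
     (forall v, S v -> v = 0) \/ (forall v, S v)).

(* weight spaces w.r.t.  h = hc (+) span(K_i) (+) D ; a weight is given by its
   values mu on hc, a on the K_i = t^0 K_i, and b on the d_i. *)
Definition weight_space (hc : {vspace g})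
    (rho : g -> 'rV[int]_n -> V -> V) (kk : 'rV[int]_n -> 'I_n -> V -> V)
    (dd : 'I_n -> V -> V) (mu : g -> K) (a b : 'I_n -> K) (v : V) : Prop :=
  (forall h, h \in hc -> rho h 0 v = mu h *: v) /\
  (forall i, kk 0 i v = a i *: v) /\ (forall i, dd i v = b i *: v).

Definition fin_dim (S : V -> Prop) : Prop :=
  exists s : seq V, forall v, S v <->
    exists c : 'I_(size s) -> K, v = \sum_(j < size s) c j *: s`_j.

Definition weight_module_fin (hc : {vspace g})
    (rho : g -> 'rV[int]_n -> V -> V) (kk : 'rV[int]_n -> 'I_n -> V -> V)
    (dd : 'I_n -> V -> V) : Prop :=
  (forall v : V, exists s : seq V, v = \sum_(w <- s) w /\
     forall w, w \in s -> exists mu a b, weight_space hc rho kk dd mu a b w) /\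
  (forall mu a b, fin_dim (weight_space hc rho kk dd mu a b)).

Definition central_operator
    (rho : g -> 'rV[int]_n -> V -> V) (kk : 'rV[int]_n -> 'I_n -> V -> V)
    (dd : 'I_n -> V -> V) (m : 'rV[int]_n) (z : V -> V) : Prop :=
  [/\ lin_op z,
      (forall x r v, z (rho x r v) = rho x r (z v)),
      (forall m' i v, z (kk m' i v) = kk m' i (z v)) &
      (forall i v, dd i (z v) - z (dd i v) = ((m ord0 i)%:~R : K) *: z v)].

End LieDefs.

(* A nonzero central operator [z] of degree [m] is bijective: its kernel and
   its image are submodules (for the image because [d_i z = z (d_i + m_i)]),
   so irreducibility leaves only [0] and [V]. Hence [T = z2^-1 z1] is a
   central operator of degree [0]: it commutes with the whole action and so
   preserves every weight space. A nonzero weight space is finite-dimensional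
   and [C] is algebraically closed, so [T] has an eigenvalue [c]; the kernel
   of [T - c] is then a nonzero submodule, hence [V], and [z1 = c z2]. *)

From mathcomp Require Import all_boot all_algebra.
From mathcomp Require Import complex reals.
From mathcomp Require boolp.
Set Implicit Arguments. Unset Strict Implicit. Unset Printing Implicit Defensive.
Import GRing.Theory.
Local Open Scope ring_scope.

Section LinOp.
Variables (K : fieldType) (V : lmodType K) (f : V -> V).
Hypothesis linf : lin_op f.

Lemma lin_op0 : f 0 = 0.
Proof.
have := linf 1 0 0; rewrite !scale1r addr0 => /(congr1 (fun x => x - f 0)).
by rewrite subrr addrK.
Qed.

Lemma lin_opD u v : f (u + v) = f u + f v.
Proof. by have := linf 1 u v; rewrite !scale1r. Qed.

Lemma lin_opZ a u : f (a *: u) = a *: f u.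
Proof. by have := linf a u 0; rewrite addr0 lin_op0 addr0. Qed.

Lemma lin_opB u v : f (u - v) = f u - f v.
Proof. by rewrite lin_opD -scaleN1r lin_opZ scaleN1r. Qed.

Lemma lin_op_iter k : lin_op (iter k f).
Proof. by elim: k => [|k IH] a u v //=; rewrite IH linf. Qed.

End LinOp.

Section PolyAct.
Variables (K : fieldType) (V : lmodType K) (T : V -> V).
Hypothesis linT : lin_op T.

Definition poly_act (p : {poly K}) (v : V) : V :=
  \sum_(i < size p) p`_i *: iter i T v.

Lemma poly_act_widen (p : {poly K}) v N :
  (size p <= N)%N -> poly_act p v = \sum_(i < N) p`_i *: iter i T v.
Proof.
move=> le_pN; rewrite /poly_act (big_ord_widen N (fun i => p`_i *: iter i T v)) //.
rewrite [RHS](bigID (fun i : 'I_N => (i < size p)%N)) /= [X in _ = _ + X]big1 ?addr0 //.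
by move=> i; rewrite -leqNgt => /(nth_default 0) ->; rewrite scale0r.
Qed.

Lemma poly_actZD c (p q : {poly K}) v :
  poly_act (c *: p + q) v = c *: poly_act p v + poly_act q v.
Proof.
pose N := (size p + size q + size (c *: p + q)%R)%N.
rewrite !(@poly_act_widen _ _ N) /N ?leq_addl // ?(leq_trans (leq_addl _ _) (leq_addr _ _))
  ?(leq_trans (leq_addr _ _) (leq_addr _ _)) //.
rewrite scaler_sumr -big_split /=; apply: eq_bigr => i _.
by rewrite coefD coefZ scalerDl scalerA.
Qed.

Lemma poly_act_lin_op (p : {poly K}) : lin_op (poly_act p).
Proof.
move=> c u v; rewrite /poly_act scaler_sumr -big_split /=; apply: eq_bigr => i _.
by rewrite lin_op_iter // scalerDr !scalerA mulrC.
Qed.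

Lemma poly_act_mulX (q : {poly K}) v : poly_act (q * 'X) v = poly_act q (T v).
Proof.
have [->|q0] := eqVneq q 0; first by rewrite mul0r /poly_act size_poly0 !big_ord0.
rewrite /poly_act size_mulX // big_ord_recl coefMX eqxx scale0r add0r.
by apply: eq_bigr => i _; rewrite coefMX /= add0n -iterS iterSr.
Qed.

Lemma poly_act_mulXsubC (q : {poly K}) a v :
  poly_act (q * ('X - a%:P)) v = poly_act q (T v - a *: v).
Proof.
rewrite mulrBr [q * a%:P]mulrC mul_polyC addrC -scaleNr poly_actZD poly_act_mulX.
by rewrite -scaleNr [T v + _]addrC (poly_act_lin_op q) addrC.
Qed.

End PolyAct.

Section AnnihilatingPoly.
Variables (K : fieldType) (V : lmodType K) (T : V -> V).

Lemma fin_dim_annihilating_poly (P : V -> Prop) :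
  fin_dim P -> (forall v, P v -> P (T v)) ->
  forall w, P w -> exists2 p : {poly K}, p != 0 & poly_act T p w = 0.
Proof.
move=> [s spanP] PT w Pw; set N := size s.
have Pit k : P (iter k T w) by elim: k => //= k; apply: PT.
have /fin_all_exists [crd crdE] : forall k : 'I_N.+1, exists r : 'rV[K]_N,
    iter k T w = \sum_(j < N) r 0 j *: s`_j.
  move=> k; have [c ->] := (spanP _).1 (Pit k).
  by exists (\row_j c j); apply: eq_bigr => j _; rewrite mxE.
pose M := \matrix_(k < N.+1, j < N) crd k 0 j.
have [u uM u0] : exists2 u : 'rV_N.+1, u *m M = 0 & u != 0.
  have : kermx M != 0 by rewrite kermx_eq0 -row_leq_rank ltnNge rank_leq_col.
  by case/rowV0Pn => u /sub_kermxP uM u0; exists u.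
pose p := \poly_(k < N.+1) u 0 (inord k).
exists p.
  apply: contraNneq u0 => p0; apply/eqP/rowP => k; rewrite mxE.
  by have := coef_poly N.+1 (fun k => u 0 (inord k)) k; rewrite ltn_ord -/p p0 coef0 inord_val.
rewrite (poly_act_widen _ _ (size_poly _ _)).
under eq_bigr => k _ do rewrite coef_poly ltn_ord inord_val crdE scaler_sumr.
rewrite exchange_big big1 // => j _.
have := congr1 (fun A : 'M[K]_(1, N) => A 0 j) uM; rewrite !mxE => uMj.
rewrite -[RHS](scale0r s`_j) -uMj scaler_suml; apply: eq_bigr => k _.
by rewrite scalerA !mxE.
Qed.

End AnnihilatingPoly.

Section ClosedFieldEigenvector.
Variables (K : closedFieldType) (V : lmodType K) (T : V -> V).
Hypothesis linT : lin_op T.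

(* Write [p = q * ('X - a)]: either [w] is an eigenvector for [a], or [q]
   annihilates the nonzero vector [T w - a w]. *)
Lemma annihilating_poly_eigenvector (p : {poly K}) w :
  p != 0 -> w != 0 -> poly_act T p w = 0 -> exists a v, v != 0 /\ T v = a *: v.
Proof.
move: {2}(size p) (leqnn (size p)) => N; elim: N p w => [|N IH] p w.
  by rewrite leqn0 size_poly_eq0 => /eqP ->; rewrite eqxx.
move=> le_pN p0 w0 pw.
have [p1|p1] := eqVneq (size p) 1.
  move: pw; rewrite /poly_act p1 big_ord1 /= => /eqP.
  rewrite scaler_eq0 (negbTE w0) orbF.
  have : lead_coef p != 0 by rewrite lead_coef_eq0.
  by rewrite lead_coefE p1 => /negbTE ->.
have [a /factor_theorem [q pq]] := closed_rootP p p1.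
have [Tw|Tw] := eqVneq (T w - a *: w) 0.
  by exists a, w; split=> //; apply/eqP; rewrite -subr_eq0 Tw.
have q0 : q != 0 by apply: contraNneq p0 => q0; rewrite pq q0 mul0r.
apply: (IH q _ _ q0 Tw); last by rewrite -poly_act_mulXsubC // -pq.
by move: le_pN; rewrite pq size_mul ?polyXsubC_eq0 // size_XsubC addn2.
Qed.

Lemma fin_dim_eigenvector (P : V -> Prop) :
  fin_dim P -> (forall v, P v -> P (T v)) ->
  forall w, P w -> w != 0 -> exists a v, v != 0 /\ T v = a *: v.
Proof.
move=> finP PT w Pw w0.
have [p p0 pw] := fin_dim_annihilating_poly finP PT Pw.
exact: annihilating_poly_eigenvector p0 w0 pw.
Qed.

End ClosedFieldEigenvector.

Section CentralOperators.
Variables (K : fieldType) (g : vectType K) (n : nat) (V : lmodType K).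
Variables (rho : g -> 'rV[int]_n -> V -> V) (kk : 'rV[int]_n -> 'I_n -> V -> V)
  (dd : 'I_n -> V -> V).
Hypotheses (linrho : forall x r, lin_op (rho x r)) (linkk : forall m i, lin_op (kk m i))
  (lindd : forall i, lin_op (dd i)).
Hypothesis irrV : tau_irreducible rho kk dd.

Definition tau_submodule (S : V -> Prop) : Prop :=
  [/\ subspace S, forall x r v, S v -> S (rho x r v),
      forall m i v, S v -> S (kk m i v) & forall i v, S v -> S (dd i v)].

Lemma tau_submodule_trivial S :
  tau_submodule S -> (forall v, S v -> v = 0) \/ (forall v, S v).
Proof. by case=> *; apply: irrV.2. Qed.

Lemma central_operator_ddE m z : central_operator rho kk dd m z ->
  forall i u, dd i (z u) = z ((m ord0 i)%:~R *: u + dd i u).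
Proof. by case=> linz _ _ zdd i u; rewrite linz -zdd subrK. Qed.

Lemma central_operator0P T :
  central_operator rho kk dd 0 T <->
  [/\ lin_op T, forall x r v, T (rho x r v) = rho x r (T v),
      forall m i v, T (kk m i v) = kk m i (T v) &
      forall i v, dd i (T v) = T (dd i v)].
Proof.
split=> -[linT Trho Tkk Tdd]; split=> // i v.
  by rewrite (central_operator_ddE (And4 linT Trho Tkk Tdd)) mxE scale0r add0r.
by rewrite Tdd mxE scale0r subrr.
Qed.

Lemma central_ker_submodule m z :
  central_operator rho kk dd m z -> tau_submodule (fun v => z v = 0).
Proof.
move=> zc; case: (zc) => linz zrho zkk _; split.
- split=> [|a u v /= zu zv]; first exact: lin_op0.
  by rewrite linz zu zv scaler0 addr0.
- by move=> x r v /= zv; rewrite zrho zv lin_op0.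
- by move=> m' i v /= zv; rewrite zkk zv lin_op0.
- move=> i v /= zv; have := central_operator_ddE zc i v.
  by rewrite zv lin_op0 // linz zv scaler0 add0r => ->.
Qed.

Lemma central_image_submodule m z :
  central_operator rho kk dd m z -> tau_submodule (fun v => exists u, v = z u).
Proof.
move=> zc; case: (zc) => linz zrho zkk _; split.
- split=> [|a _ _ [u ->] [u' ->]]; first by exists 0; rewrite lin_op0.
  by exists (a *: u + u'); rewrite linz.
- by move=> x r _ [u ->]; exists (rho x r u); rewrite zrho.
- by move=> m' i _ [u ->]; exists (kk m' i u); rewrite zkk.
- by move=> i _ [u ->]; eexists; rewrite (central_operator_ddE zc).
Qed.

Lemma central_operator_inj m z :
  central_operator rho kk dd m z -> (exists v, z v != 0) -> injective z.
Proof.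
move=> zc [v zv0] u u' zuu'; have linz : lin_op z by case: zc.
apply/eqP; rewrite -subr_eq0; apply/eqP.
have [ker0|kerV] := tau_submodule_trivial (central_ker_submodule zc).
  by apply: ker0; rewrite /= lin_opB // zuu' subrr.
by move: zv0; rewrite kerV eqxx.
Qed.

Lemma central_operator_surj m z :
  central_operator rho kk dd m z -> (exists v, z v != 0) -> forall v, exists u, v = z u.
Proof.
move=> zc [v zv0].
have [im0|imV] := tau_submodule_trivial (central_image_submodule zc); last exact: imV.
by move: zv0; rewrite (im0 (z v)) ?eqxx //; exists v.
Qed.

(* [T] is [z2^-1 \o z1], of degree [m - m = 0]. *)
Lemma central_operator_factor m z1 z2 :
  central_operator rho kk dd m z1 -> central_operator rho kk dd m z2 ->
  (exists v, z2 v != 0) ->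
  exists2 T, central_operator rho kk dd 0 T & forall v, z1 v = z2 (T v).
Proof.
move=> z1c z2c z2_neq0; have z2_inj := central_operator_inj z2c z2_neq0.
have z2_surj := central_operator_surj z2c z2_neq0.
pose T v := projT1 (boolp.cid (z2_surj (z1 v))).
have z1E v : z1 v = z2 (T v) := projT2 (boolp.cid (z2_surj (z1 v))).
have z1dd := central_operator_ddE z1c; have z2dd := central_operator_ddE z2c.
case: z1c z2c => linz1 z1rho z1kk _ [linz2 z2rho z2kk _].
exists T => //; apply/central_operator0P; split.
- by move=> a u v; apply: z2_inj; rewrite linz2 -!z1E linz1.
- by move=> x r v; apply: z2_inj; rewrite z2rho -!z1E z1rho.
- by move=> m' i v; apply: z2_inj; rewrite z2kk -!z1E z1kk.
- move=> i v; apply: z2_inj; apply: (addrI ((m ord0 i)%:~R *: z1 v)).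
  by rewrite -z1E -linz1 -z1dd z1E z2dd linz2.
Qed.

Lemma central_operator0_subZ T c :
  central_operator rho kk dd 0 T -> central_operator rho kk dd 0 (fun v => T v - c *: v).
Proof.
case/central_operator0P=> linT Trho Tkk Tdd; apply/central_operator0P; split.
- by move=> a u v; rewrite linT scalerDr scalerBr !scalerA mulrC addrACA opprD.
- by move=> x r v; rewrite (lin_opB (linrho x r)) (lin_opZ (linrho x r)) Trho.
- by move=> m' i v; rewrite (lin_opB (linkk m' i)) (lin_opZ (linkk m' i)) Tkk.
- by move=> i v; rewrite (lin_opB (lindd i)) (lin_opZ (lindd i)) Tdd.
Qed.

Lemma central_operator0_scalar T :
  central_operator rho kk dd 0 T -> (exists c u, u != 0 /\ T u = c *: u) ->
  exists c, forall v, T v = c *: v.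
Proof.
move=> Tc [c [u [u0 Tu]]]; exists c => v; apply/eqP; rewrite -subr_eq0; apply/eqP.
have [ker0|kerV] := tau_submodule_trivial (central_ker_submodule (central_operator0_subZ c Tc)).
  by move: u0; rewrite (ker0 u) ?eqxx //= Tu subrr.
exact: kerV.
Qed.

Lemma central_operator0_weight_space hc T mu a b v :
  central_operator rho kk dd 0 T ->
  weight_space hc rho kk dd mu a b v -> weight_space hc rho kk dd mu a b (T v).
Proof.
case/central_operator0P=> linT Trho Tkk Tdd [vh [vk vd]]; split; [|split].
- by move=> h hh; rewrite -Trho vh // lin_opZ.
- by move=> i; rewrite -Tkk vk lin_opZ.
- by move=> i; rewrite Tdd vd lin_opZ.
Qed.

Lemma exists_nonzero_weight_vector hc :
  weight_module_fin hc rho kk dd ->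
  exists mu a b w, weight_space hc rho kk dd mu a b w /\ w != 0.
Proof.
case=> decV _; have [v v0] := irrV.1; have [s [sv sW]] := decV v.
have [w ws w0] : exists2 w, w \in s & w != 0.
  apply/hasP; apply: contraNT v0 => /hasPn s0; rewrite sv big1_seq // => w /andP[_].
  by move/s0; rewrite negbK => /eqP.
by have [mu [a [b wW]]] := sW w ws; exists mu, a, b, w.
Qed.

End CentralOperators.

Theorem lemma4p6 (R : realType) (g : vectType R[i]) (br : g -> g -> g)
  (hc : {vspace g}) (form : g -> g -> R[i]) (n : nat) (V : lmodType R[i])
  (rho : g -> 'rV[int]_n -> V -> V) (kk : 'rV[int]_n -> 'I_n -> V -> V)
  (dd : 'I_n -> V -> V) (m : 'rV[int]_n) (z1 z2 : V -> V) :
  simple_lie br -> cartan_subalgebra br hc -> nondeg_invariant_form br form ->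
  (2 <= n)%N ->
  is_tau_module br rho kk dd form ->
  tau_irreducible rho kk dd ->
  weight_module_fin hc rho kk dd ->
  central_operator rho kk dd m z1 -> central_operator rho kk dd m z2 ->
  (exists v, z1 v != 0) -> (exists v, z2 v != 0) ->
  exists c : R[i], forall v, z1 v = c *: z2 v.
Proof.
move=> _ _ _ _ [[linrho [linkk lindd]] _ _ _ _] irrV weightV z1c z2c _ z2_neq0.
have [T Tc z1E] := central_operator_factor linrho linkk lindd irrV z1c z2c z2_neq0.
have [mu [a [b [w [wW w0]]]]] := exists_nonzero_weight_vector irrV weightV.
have linT : lin_op T by case: Tc.
have T_eigen : exists c u, u != 0 /\ T u = c *: u.
  apply: (fin_dim_eigenvector linT (weightV.2 mu a b) _ wW w0) => u.
  exact: central_operator0_weight_space.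
have [c Tc_scalar] := central_operator0_scalar linrho linkk lindd irrV Tc T_eigen.
exists c => v; have linz2 : lin_op z2 by case: z2c.
by rewrite z1E Tc_scalar lin_opZ.
Qed.
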